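(* Let $A$ be a finite alphabet with at least two letters and let $w\in A^{+}$ be unbordered, i.e. its maximal border is $\varepsilon$: no non-empty word is simultaneously a proper prefix and a proper suffix of $w$. Then for every integer $k\geq 0$ the language $\mathrm{Count}(w,k)$ has generalised star-height $0$, and for all integers $n\geq 2$ and $0\le k<n$ the language $\mathrm{ModCount}(w,k,n)$ has generalised star-height at most $1$.
   Context: A border of a word $w$ is a word that is both a prefix and a suffix of $w$; the maximal border is the longest proper border. Generalised regular expressions over $A$: $\emptyset$, $\varepsilon$ and each letter are expressions; if $E,F$ are expressions so are $E\cup F$, $EF$, $E^{\ast}$, $E^{c}$ (complement in $A^{\ast}$). Star-height: $h(\emptyset)=h(\varepsilon)=h(a)=0$, $h(E\cup F)=h(EF)=\max\{h(E),h(F)\}$, $h(E^{\ast})=h(E)+1$, $h(E^{c})=h(E)$; the star-height of a language is the minimum of $h(E)$ over expressions $E$ representing it. For $w\in A^{+}$ and $v\in A^{\ast}$, $|v|_{w}$ is the number of factorisations $v=xwy$ with $x,y\in A^{\ast}$ (overlapping occurrences counted separately). $\mathrm{Count}(w,k)=\{v\in A^{\ast}:|v|_{w}=k\}$ for $k\ge0$; $\mathrm{ModCount}(w,k,n)=\{v\in A^{\ast}:|v|_{w}\equiv k\pmod n\}$ for $n\ge2$, $0\le k<n$. *)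

From mathcomp Require Import all_boot.
Set Implicit Arguments. Unset Strict Implicit. Unset Printing Implicit Defensive.

Inductive gre (A : Type) : Type :=
| GEmpty : gre A
| GEps : gre A
| GLet : A -> gre A
| GUnion : gre A -> gre A -> gre A
| GConcat : gre A -> gre A -> gre A
| GStar : gre A -> gre A
| GCompl : gre A -> gre A.

Arguments GEmpty {A}.
Arguments GEps {A}.

Fixpoint lang (A : eqType) (E : gre A) (v : seq A) : Prop :=
  match E with
  | GEmpty => False
  | GEps => v = [::]
  | GLet a => v = [:: a]
  | GUnion E F => lang E v \/ lang F v
  | GConcat E F => exists x y, v = x ++ y /\ lang E x /\ lang F y
  | GStar E => exists ws : seq (seq A),
                 v = flatten ws /\ (forall u, u \in ws -> lang E u)
  | GCompl E => ~ lang E v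
  end.

Fixpoint sheight (A : Type) (E : gre A) : nat :=
  match E with
  | GEmpty | GEps | GLet _ => 0
  | GUnion E F | GConcat E F => maxn (sheight E) (sheight F)
  | GStar E => (sheight E).+1
  | GCompl E => sheight E
  end.

Definition gsh_le (A : eqType) (L : seq A -> Prop) (h : nat) : Prop :=
  exists E : gre A, sheight E <= h /\ forall v, lang E v <-> L v.

(* Number of factorisations v = x w y: positions i with w occurring at i. *)
Definition occ (A : eqType) (w v : seq A) : nat :=
  count (fun i => take (size w) (drop i v) == w) (iota 0 (size v).+1).

Definition Count (A : eqType) (w : seq A) (k : nat) : seq A -> Prop :=
  fun v => occ w v = k.

Definition ModCount (A : eqType) (w : seq A) (k n : nat) : seq A -> Prop :=
  fun v => occ w v = k %[mod n].

Definition unbordered (A : eqType) (w : seq A) : Prop :=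
  forall u : seq A, u != [::] -> size u < size w -> prefix u w -> suffix u w -> False.

From mathcomp Require Import all_boot zify.

Set Implicit Arguments.
Unset Strict Implicit.
Unset Printing Implicit Defensive.

(* Since w is unbordered, two occurrences of w can never overlap, so
   occ w (x ++ w ++ y) = occ w x + 1 + occ w y.  Hence a word with exactly k
   occurrences factors as x_0 w x_1 ... w x_k with every x_i free of w.  The
   w-free words form the star-free language F, the complement of A^* w A^*
   (where A^* is itself the complement of the empty set), and
   Count(w,k) = F (w F)^k, ModCount(w,k,n) = F (w F)^k ((w F)^n)^*. *)

Section Occurrences.
Variables (A : eqType) (w : seq A).

Definition occurs_at (v : seq A) (i : nat) : bool := take (size w) (drop i v) == w.

Lemma occE v : occ w v = count (occurs_at v) (iota 0 (size v).+1).
Proof. by []. Qed.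

Lemma occ_cat x y :
  occ w (x ++ y) = count (occurs_at (x ++ y)) (iota 0 (size x)) + occ w y.
Proof.
rewrite !occE size_cat -addnS iotaD count_cat add0n.
have -> : iota (size x) (size y).+1 = map (addn (size x)) (iota 0 (size y).+1).
  by rewrite -iotaDl addn0.
rewrite count_map; congr (_ + _); apply: eq_count => j /=.
by rewrite /occurs_at addnC -drop_drop drop_size_cat.
Qed.

Lemma occ_nil : w != [::] -> occ w [::] = 0.
Proof. by rewrite occE /= /occurs_at eq_sym => /negbTE ->. Qed.

Lemma occE_lt v : w != [::] -> occ w v = count (occurs_at v) (iota 0 (size v)).
Proof. by move=> wn; rewrite -{1}[v]cats0 occ_cat cats0 occ_nil ?addn0. Qed.

Lemma occ_gt0 v : 0 < occ w v -> exists x y, v = x ++ w ++ y.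
Proof.
rewrite occE -has_count => /hasP [i _ /eqP wi].
exists (take i v), (drop (size w) (drop i v)).
by rewrite -{1}wi !cat_take_drop.
Qed.

End Occurrences.

Section WordExpression.
Variable A : eqType.

Fixpoint gword (s : seq A) : gre A :=
  if s is a :: s' then GConcat (GLet a) (gword s') else GEps.

Lemma lang_gword s v : lang (gword s) v <-> v = s.
Proof.
elim: s v => [|a s IH] v //=; split=> [[x [y [-> [-> /IH ->]]]] // | ->].
by exists [:: a], s; rewrite IH.
Qed.

Lemma sheight_gword s : sheight (gword s) = 0.
Proof. by elim: s => //= a s ->. Qed.

End WordExpression.

Section UnborderedOccurrences.
Variables (A : eqType) (w : seq A).
Hypotheses (w_neq0 : w != [::]) (w_unbordered : unbordered w).

Lemma unbordered_overlap d u e :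
  w = d ++ u -> w = u ++ e -> 0 < size d -> 0 < size u -> False.
Proof.
move=> wdu wue d_gt0 u_gt0; apply: (@w_unbordered u).
- by rewrite -size_eq0 -lt0n.
- by rewrite wdu size_cat; lia.
- by apply/prefixP; exists e.
- by apply/suffixP; exists d.
Qed.

Lemma take_cat_unbordered d y : 0 < size d ->
  (take (size w) (d ++ w ++ y) == w) = (take (size w) d == w).
Proof.
move=> d_gt0; have [w_le_d | d_lt_w] := leqP (size w) (size d).
  by rewrite takel_cat.
rewrite take_cat ltnNge (ltnW d_lt_w) /= takel_cat; last by lia.
rewrite [take _ d]take_oversize; last exact: ltnW.
have -> : (d == w) = false by apply/eqP => dw; rewrite dw ltnn in d_lt_w.
apply/eqP => wdu.
apply: (unbordered_overlap (esym wdu) (esym (cat_take_drop _ w)) d_gt0).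
by rewrite size_takel; lia.
Qed.

Lemma take_drop_cat_unbordered j y : 0 < j < size w ->
  (take (size w) (drop j w ++ y) == w) = false.
Proof.
move=> /andP [j_gt0 j_lt_w]; rewrite take_cat size_drop ltnNge leq_subr /=.
apply/eqP => wue; apply: (unbordered_overlap (esym (cat_take_drop j w)) (esym wue)).
  by rewrite size_takel //; lia.
by rewrite size_drop; lia.
Qed.

Lemma occ_w_cat y : occ w (w ++ y) = (occ w y).+1.
Proof.
have w_gt0 : 0 < size w by rewrite lt0n size_eq0.
rewrite occ_cat -add1n; congr (_ + _).
rewrite -(subnKC w_gt0) iotaD count_cat /= {1}/occurs_at drop0 take_size_cat //.
rewrite eqxx (@eq_in_count _ _ pred0) ?count_pred0 // => j.
rewrite mem_iota subnKC // => /andP [j_gt0 j_lt_w] /=.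
by rewrite /occurs_at drop_cat j_lt_w take_drop_cat_unbordered ?j_gt0.
Qed.

Lemma occ_cat_unbordered x y : occ w (x ++ w ++ y) = occ w x + 1 + occ w y.
Proof.
rewrite occ_cat occ_w_cat (occE_lt x w_neq0) addnS addn1 addSn.
congr (_ + _).+1; apply: eq_in_count => i.
rewrite mem_iota add0n => /andP [_ i_lt_x].
by rewrite /occurs_at drop_cat i_lt_x take_cat_unbordered // size_drop; lia.
Qed.

Lemma occ_first v : 0 < occ w v -> exists x y, v = x ++ w ++ y /\ occ w x = 0.
Proof.
elim: {v}(occ w v).+1 {-2}v (ltnSn (occ w v)) => // c IH v v_lt v_gt0.
have [x [y def_v]] := occ_gt0 v_gt0.
have [x_eq0 | x_gt0] := posnP (occ w x); first by exists x, y.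
have x_lt : occ w x < c by move: v_lt; rewrite def_v occ_cat_unbordered; lia.
have [x1 [x2 [def_x x1_eq0]]] := IH x x_lt x_gt0.
by exists x1, (x2 ++ w ++ y); rewrite def_v def_x -!catA.
Qed.

Lemma occ_split a b v : occ w v = a + 1 + b ->
  exists x z, [/\ v = x ++ w ++ z, occ w x = a & occ w z = b].
Proof.
elim: a v => [|a IH] v occ_v.
  have [x [z [def_v x_eq0]]] := @occ_first v ltac:(by rewrite occ_v; lia).
  exists x, z; split=> //.
  by move: occ_v; rewrite def_v occ_cat_unbordered x_eq0; lia.
have [x0 [y0 [def_v x0_eq0]]] := @occ_first v ltac:(by rewrite occ_v; lia).
have y0_occ : occ w y0 = a + 1 + b.
  by move: occ_v; rewrite def_v occ_cat_unbordered x0_eq0; lia.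
have [x1 [z [def_y0 x1_occ z_occ]]] := IH y0 y0_occ.
exists (x0 ++ w ++ x1), z; split=> //; first by rewrite def_v def_y0 -!catA.
by rewrite occ_cat_unbordered x0_eq0 x1_occ; lia.
Qed.

Definition gfree : gre A :=
  GCompl (GConcat (GCompl GEmpty) (GConcat (gword w) (GCompl GEmpty))).

Lemma lang_gfree v : lang gfree v <-> occ w v = 0.
Proof.
split=> [v_free | v_eq0 [x [y [def_v [_ [u [z [def_y [/lang_gword def_u _]]]]]]]]].
  apply/eqP; rewrite eqn0Ngt; apply/negP => /occ_gt0 [x [y def_v]].
  apply: v_free; exists x, (w ++ y); split=> //; split=> [[] |].
  by exists w, y; split=> //; split=> [|[]]; apply/lang_gword.
by move: v_eq0; rewrite def_v def_y def_u occ_cat_unbordered; lia.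
Qed.

Fixpoint gcount (j : nat) : gre A :=
  if j is j'.+1 then GConcat gfree (GConcat (gword w) (gcount j')) else gfree.

Lemma sheight_gcount j : sheight (gcount j) = 0.
Proof. by elim: j => [|j IH] /=; rewrite ?IH sheight_gword. Qed.

Lemma lang_gcount j v : lang (gcount j) v <-> occ w v = j.
Proof.
elim: j v => [|j IH] v /=; first exact: lang_gfree.
split=> [[x [y [-> [/lang_gfree x_eq0 [u [z [-> [/lang_gword -> /IH z_occ]]]]]]]]
        | v_occ].
  by rewrite occ_cat_unbordered x_eq0 z_occ add0n add1n.
have [x [y [def_v x_eq0]]] := @occ_first v ltac:(by rewrite v_occ).
exists x, (w ++ y); split=> //; split; first exact/lang_gfree.
exists w, y; split=> //; rewrite lang_gword IH; split=> //.
by move: v_occ; rewrite def_v occ_cat_unbordered x_eq0; lia.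
Qed.

Definition gperiod (n : nat) : gre A := GConcat (gword w) (gcount n.-1).

Definition gmodcount (k n : nat) : gre A := GConcat (gcount k) (GStar (gperiod n)).

Lemma sheight_gmodcount k n : sheight (gmodcount k n) = 1.
Proof. by rewrite /= !sheight_gcount sheight_gword. Qed.

Lemma occ_cat_flatten_gperiod n x ws : 0 < n ->
  (forall u, u \in ws -> lang (gperiod n) u) ->
  occ w (x ++ flatten ws) = occ w x + n * size ws.
Proof.
move=> n_gt0; elim: ws x => [|u ws IH] x ws_period /=.
  by rewrite cats0 muln0 addn0.
have [a [b [-> [/lang_gword -> /lang_gcount b_occ]]]] := ws_period u (mem_head _ _).
rewrite catA IH => [|u' u'_ws]; last by apply: ws_period; rewrite inE u'_ws orbT.
by rewrite occ_cat_unbordered b_occ mulnS -(addnA _ 1) add1n prednK // addnA.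
Qed.

Lemma lang_gmodcount_mul k n m v : 0 < n ->
  occ w v = k + n * m -> lang (gmodcount k n) v.
Proof.
move=> n_gt0; elim: m v => [|m IH] v v_occ.
  exists v, [::]; rewrite cats0 lang_gcount v_occ muln0 addn0.
  by do 2!split=> //; exists [::].
have [x [z [def_v x_occ z_occ]]] := @occ_split (k + n * m) n.-1 v
  ltac:(by rewrite v_occ -subn1; lia).
have [x' [y' [def_x [x'_occ [ws [def_y' ws_period]]]]]] := IH x x_occ.
exists x', (y' ++ w ++ z); split; first by rewrite def_v def_x -catA.
split=> //; exists (rcons ws (w ++ z)); split.
  by rewrite -cats1 flatten_cat def_y' /= cats0.
move=> u; rewrite mem_rcons inE => /orP [/eqP -> | /ws_period //].
by exists w, z; rewrite lang_gword lang_gcount.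
Qed.

Lemma lang_gmodcount k n v : k < n ->
  lang (gmodcount k n) v <-> occ w v = k %[mod n].
Proof.
move=> k_lt_n; have n_gt0 : 0 < n by lia.
split=> [[x [y [-> [/lang_gcount x_occ [ws [-> ws_period]]]]]] | v_mod].
  by rewrite (occ_cat_flatten_gperiod x n_gt0 ws_period) x_occ addnC mulnC modnMDl.
apply: (@lang_gmodcount_mul k n (occ w v %/ n)) => //.
by rewrite {1}(divn_eq (occ w v) n) v_mod modn_small // addnC mulnC.
Qed.

End UnborderedOccurrences.

Theorem lemma2p2 (A : finType) (w : seq A) :
  1 < #|A| -> w != [::] -> unbordered w ->
  (forall k : nat, gsh_le (Count w k) 0) /\
  (forall n k : nat, 2 <= n -> k < n -> gsh_le (ModCount w k n) 1).
Proof.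
move=> _ w_neq0 w_unbordered; split=> [k | n k _ k_lt_n].
  exists (gcount w k); split; first by rewrite sheight_gcount.
  by move=> v; exact: lang_gcount.
exists (gmodcount w k n); split; first by rewrite sheight_gmodcount.
by move=> v; exact: lang_gmodcount.
Qed.
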